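(* Let $G$ be a group. (i) If $H \leqslant M \leqslant G$, $M$ is exponential in $G$ and $H$ is exponential in $M$, then $H$ is exponential in $G$. (ii) If $H$ and $K$ are exponential subgroups of $G$, then $H \cap K$ is exponential in $G$.
   Context: A subgroup $H$ of finite index in a group $G$ is called exponential in $G$ if $x^{|G:H|} \in H$ for every $x \in G$. *)

From Stdlib Require Import Arith.

Set Implicit Arguments.

Record group := Group {
  carrier :> Type;
  gmul : carrier -> carrier -> carrier;
  gone : carrier;
  ginv : carrier -> carrier;
  gmulA : forall x y z, gmul x (gmul y z) = gmul (gmul x y) z;
  gmul1 : forall x, gmul gone x = x;
  gmulV : forall x, gmul (ginv x) x = gone
}.

Arguments gmul {g}.
Arguments gone {g}.
Arguments ginv {g}.

Fixpoint gpow {G : group} (x : G) (n : nat) : G :=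
  match n with
  | O => gone
  | S m => gmul x (gpow x m)
  end.

Definition is_subgroup {G : group} (H : G -> Prop) : Prop :=
  H gone /\ (forall x y, H x -> H y -> H (gmul x y)) /\
  (forall x, H x -> H (ginv x)).

Definition subset {G : group} (A B : G -> Prop) : Prop := forall x, A x -> B x.

Definition whole (G : group) : G -> Prop := fun _ => True.

Definition inter {G : group} (A B : G -> Prop) : G -> Prop :=
  fun x => A x /\ B x.

(* |M : H| = n : there is a left transversal t_0, ..., t_(n-1) in M of H,
   i.e. every x in M lies in exactly one left coset t_i H, i < n. *)
Definition has_index {G : group} (M H : G -> Prop) (n : nat) : Prop :=
  exists t : nat -> G,
    (forall i, i < n -> M (t i)) /\
    (forall x, M x ->
       (exists i, i < n /\ H (gmul (ginv (t i)) x)) /\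
       (forall i j, i < n -> j < n ->
          H (gmul (ginv (t i)) x) -> H (gmul (ginv (t j)) x) -> i = j)).

Definition exponential {G : group} (M H : G -> Prop) : Prop :=
  exists n, has_index M H n /\ (forall x, M x -> H (gpow x n)).

From Stdlib Require Import Arith Lia List ClassicalEpsilon Classical.

(* An index is the size of a numbering of the cosets, so it is unique and
   multiplicative in towers H <= M <= L.  (i) follows from |G:H| = |G:M||M:H|
   and x^(mp) = (x^m)^p.  For (ii), H n K has finite index in H (at most
   |G:K|) and in K, and the tower law computed through H and through K gives
   |G : H n K| = |G:H||H : H n K| = |G:K||K : H n K|, a multiple of both
   exponents. *)

Section GroupFacts.
Context {G : group}.
Implicit Types x y t : G.

Lemma mulgV x : gmul x (ginv x) = gone.
Proof.
  set (y := gmul x (ginv x)).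
  assert (idem_y : gmul y y = y).
  { unfold y. rewrite <- gmulA, (gmulA _ (ginv x) x (ginv x)), gmulV, gmul1.
    reflexivity. }
  rewrite <- (gmul1 _ y), <- (gmulV _ y) at 1.
  rewrite <- gmulA, idem_y. apply gmulV.
Qed.

Lemma mulg1 x : gmul x gone = x.
Proof. rewrite <- (gmulV _ x), gmulA, mulgV, gmul1. reflexivity. Qed.

Lemma mul_eq1_inv x y : gmul x y = gone -> x = ginv y.
Proof.
  intro E. rewrite <- (mulg1 x), <- (mulgV y), gmulA, E, gmul1. reflexivity.
Qed.

Lemma invgK x : ginv (ginv x) = x.
Proof. symmetry. apply mul_eq1_inv, mulgV. Qed.

Lemma invgM x y : ginv (gmul x y) = gmul (ginv y) (ginv x).
Proof.
  symmetry. apply mul_eq1_inv.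
  rewrite <- gmulA, (gmulA _ (ginv x) x y), gmulV, gmul1, gmulV. reflexivity.
Qed.

Lemma leftquot_transl t x y :
  gmul (ginv (gmul (ginv t) x)) (gmul (ginv t) y) = gmul (ginv x) y.
Proof.
  rewrite invgM, invgK, <- gmulA, (gmulA _ t (ginv t) y), mulgV, gmul1.
  reflexivity.
Qed.

Lemma mulKg t y : gmul (ginv t) (gmul t y) = y.
Proof. rewrite gmulA, gmulV, gmul1. reflexivity. Qed.

Lemma gpowD x a b : gpow x (a + b) = gmul (gpow x a) (gpow x b).
Proof.
  induction a as [|a IH]; simpl.
  - rewrite gmul1. reflexivity.
  - rewrite IH, gmulA. reflexivity.
Qed.

Lemma gpowM x a b : gpow x (a * b) = gpow (gpow x a) b.
Proof.
  induction b as [|b IH]; simpl.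
  - rewrite Nat.mul_0_r. reflexivity.
  - rewrite Nat.mul_succ_r, Nat.add_comm, gpowD, IH. reflexivity.
Qed.

Lemma subgroup_gpow (H : G -> Prop) x n : is_subgroup H -> H x -> H (gpow x n).
Proof. intros (H1 & HM & _) Hx. induction n; simpl; auto. Qed.

Lemma subgroup_leftquot (H : G -> Prop) t x y : is_subgroup H ->
  H (gmul (ginv t) x) -> H (gmul (ginv t) y) -> H (gmul (ginv x) y).
Proof. intros (_ & HM & HV) Hx Hy. rewrite <- (leftquot_transl t). auto. Qed.

Lemma subgroup_leftquot_trans (H : G -> Prop) t x y : is_subgroup H ->
  H (gmul (ginv t) x) -> H (gmul (ginv x) y) -> H (gmul (ginv t) y).
Proof.
  intros (_ & HM & _) Htx Hxy.
  replace (gmul (ginv t) y) with (gmul (gmul (ginv t) x) (gmul (ginv x) y)); auto.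
  rewrite <- gmulA, (gmulA _ x (ginv x) y), mulgV, gmul1. reflexivity.
Qed.

Lemma is_subgroup_whole : is_subgroup (whole G).
Proof. repeat split. Qed.

Lemma is_subgroup_inter (H K : G -> Prop) :
  is_subgroup H -> is_subgroup K -> is_subgroup (inter H K).
Proof.
  intros (H1 & HM & HV) (K1 & KM & KV); unfold inter.
  split; [|split].
  - split; assumption.
  - intros x y [Hx Kx] [Hy Ky]. split; auto.
  - intros x [Hx Kx]. split; auto.
Qed.

End GroupFacts.

Lemma injective_bounded_le n n' (h : nat -> nat) :
  (forall i, i < n -> h i < n') ->
  (forall i j, i < n -> j < n -> h i = h j -> i = j) -> n <= n'.
Proof.
  intros h_bound h_inj.
  rewrite <- (length_seq n 0), <- (length_seq n' 0), <- (length_map h).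
  apply NoDup_incl_length.
  - apply NoDup_map_NoDup_ForallPairs; [|apply seq_NoDup].
    intros a b Ha Hb. apply in_seq in Ha, Hb. apply h_inj; lia.
  - intros y Hy. apply in_map_iff in Hy as [a [<- Ha]].
    apply in_seq in Ha. apply in_seq. specialize (h_bound a). lia.
Qed.

Lemma digits_inj a b c d p :
  b < p -> d < p -> a * p + b = c * p + d -> a = c /\ b = d.
Proof.
  intros Hb Hd E.
  assert (a = c) by (destruct (Nat.lt_trichotomy a c) as [|[|]]; nia).
  subst. lia.
Qed.

Section CosetLabelings.
Context {G : group}.
Implicit Types (L M H K J : G -> Prop) (f g : G -> nat).

(* [f] numbers the left cosets of [H] in [M] injectively by [0, N); a
   labeling moreover uses every number below [n], so that [n = |M : H|]. *)
Definition coset_code M H (N : nat) f : Prop :=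
  (forall x, M x -> f x < N) /\
  (forall x y, M x -> M y -> f x = f y <-> H (gmul (ginv x) y)).

Definition coset_labeling M H (n : nat) f : Prop :=
  coset_code M H n f /\ (forall i, i < n -> exists x, M x /\ f x = i).

Lemma has_index_labeling M H n :
  is_subgroup H -> has_index M H n -> exists f, coset_labeling M H n f.
Proof.
  intros SH [t [t_in t_cosets]].
  pose (f x := epsilon (inhabits 0) (fun i => i < n /\ H (gmul (ginv (t i)) x))).
  assert (f_spec : forall x, M x -> f x < n /\ H (gmul (ginv (t (f x))) x)).
  { intros x Mx. apply epsilon_spec, (t_cosets x Mx). }
  exists f. split; [split|].
  - intros x Mx. apply f_spec, Mx.
  - intros x y Mx My. destruct (f_spec x Mx) as [fx_lt Hx].
    destruct (f_spec y My) as [fy_lt Hy]. split.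
    + intro E. rewrite E in Hx. exact (subgroup_leftquot _ _ _ _ SH Hx Hy).
    + intro Hxy. apply (proj2 (t_cosets y My)); auto.
      exact (subgroup_leftquot_trans _ _ _ _ SH Hx Hxy).
  - intros i Hi. exists (t i). split; [auto|].
    destruct (f_spec (t i) (t_in i Hi)) as [fti_lt Hti].
    apply (proj2 (t_cosets (t i) (t_in i Hi))); auto.
    rewrite gmulV. apply SH.
Qed.

Lemma labeling_has_index M H n f : coset_labeling M H n f -> has_index M H n.
Proof.
  intros [[f_lt f_eq] f_onto].
  pose (t i := epsilon (inhabits gone) (fun x => M x /\ f x = i)).
  assert (t_spec : forall i, i < n -> M (t i) /\ f (t i) = i).
  { intros i Hi. apply epsilon_spec, f_onto, Hi. }
  exists t. split.
  - intros i Hi. apply t_spec, Hi.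
  - intros x Mx. split.
    + exists (f x). destruct (t_spec (f x) (f_lt x Mx)) as [Mt ft].
      split; [auto|]. apply f_eq; auto.
    + intros i j Hi Hj Hix Hjx.
      destruct (t_spec i Hi) as [Mti fti], (t_spec j Hj) as [Mtj ftj].
      apply (f_eq _ _ Mti Mx) in Hix. apply (f_eq _ _ Mtj Mx) in Hjx. lia.
Qed.

Lemma labeling_le_code M H n N f g :
  coset_labeling M H n f -> coset_code M H N g -> n <= N.
Proof.
  intros [[_ f_eq] f_onto] [g_lt g_eq].
  pose (r i := epsilon (inhabits gone) (fun x => M x /\ f x = i)).
  assert (r_spec : forall i, i < n -> M (r i) /\ f (r i) = i).
  { intros i Hi. apply epsilon_spec, f_onto, Hi. }
  apply (injective_bounded_le n N (fun i => g (r i))).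
  - intros i Hi. apply g_lt, r_spec, Hi.
  - intros i j Hi Hj E.
    destruct (r_spec i Hi) as [Mi fi], (r_spec j Hj) as [Mj fj].
    apply (g_eq _ _ Mi Mj), (f_eq _ _ Mi Mj) in E. lia.
Qed.

Lemma has_index_unique M H n n' :
  is_subgroup H -> has_index M H n -> has_index M H n' -> n = n'.
Proof.
  intros SH In In'.
  destruct (has_index_labeling M H n SH In) as [f Lf].
  destruct (has_index_labeling M H n' SH In') as [g Lg].
  apply Nat.le_antisymm; eapply labeling_le_code; eauto; apply Lg || apply Lf.
Qed.

(* Unused numbers are squeezed out one at a time: the top label [N] is renamed
   to a free label [j], which keeps the code injective on cosets. *)
Lemma coset_code_labeling M H N f :
  coset_code M H N f -> exists n g, coset_labeling M H n g.
Proof.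
  revert f. induction N as [|N IH]; intros f [f_lt f_eq].
  - exists 0, f. split; [split; auto|intros; lia].
  - destruct (classic (exists j, j <= N /\ ~ exists x, M x /\ f x = j))
      as [[j [Hj j_free]]|all_used].
    + apply (IH (fun x => if f x =? N then j else f x)).
      assert (f_ne_j : forall x, M x -> f x <> j)
        by (intros x Mx E; apply j_free; eauto).
      split.
      * intros x Mx. specialize (f_lt x Mx).
        destruct (Nat.eqb_spec (f x) N); [|lia].
        assert (j <> N) by (intros ->; apply j_free; eauto). lia.
      * intros x y Mx My. rewrite <- f_eq by auto.
        specialize (f_ne_j x Mx) as Hx. specialize (f_ne_j y My) as Hy.
        destruct (Nat.eqb_spec (f x) N), (Nat.eqb_spec (f y) N); split; lia.
    + exists (S N), f. split; [split; auto|].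
      intros i Hi. apply NNPP. intro i_free. apply all_used.
      exists i. split; [lia|auto].
Qed.

Lemma coset_code_restrict L M K J N f :
  is_subgroup M -> subset M L -> (forall x, M x -> J x <-> K x) ->
  coset_code L K N f -> coset_code M J N f.
Proof.
  intros (_ & MM & MV) sML JK [f_lt f_eq]. split.
  - intros x Mx. apply f_lt, sML, Mx.
  - intros x y Mx My. rewrite JK by auto. apply f_eq; auto.
Qed.

Lemma has_index_restrict L M K J k :
  is_subgroup K -> is_subgroup M -> subset M L ->
  (forall x, M x -> J x <-> K x) ->
  has_index L K k -> exists p, has_index M J p.
Proof.
  intros SK SM sML JK Ik.
  destruct (has_index_labeling L K k SK Ik) as [f [Cf _]].
  destruct (coset_code_labeling M J k f) as [p [g Lg]].
  { exact (coset_code_restrict L M K J k f SM sML JK Cf). }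
  exists p. exact (labeling_has_index M J p g Lg).
Qed.

(* The label of [x] is [f x * p + g (t^-1 x)], with [t] the chosen
   representative of the coset [x M]. *)
Lemma labeling_tower L M H m p f g :
  is_subgroup L -> subset H M -> subset M L ->
  coset_labeling L M m f -> coset_labeling M H p g ->
  exists F, coset_labeling L H (m * p) F.
Proof.
  intros (_ & LM & _) sHM sML [[f_lt f_eq] f_onto] [[g_lt g_eq] g_onto].
  pose (t i := epsilon (inhabits gone) (fun x => L x /\ f x = i)).
  assert (t_spec : forall i, i < m -> L (t i) /\ f (t i) = i).
  { intros i Hi. apply epsilon_spec, f_onto, Hi. }
  pose (r x := t (f x)).
  assert (r_in : forall x, L x -> M (gmul (ginv (r x)) x)).
  { intros x Lx. destruct (t_spec (f x) (f_lt x Lx)) as [Lr fr].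
    apply f_eq; auto. }
  exists (fun x => f x * p + g (gmul (ginv (r x)) x)). split; [split|].
  - intros x Lx. specialize (f_lt x Lx).
    specialize (g_lt _ (r_in x Lx)). nia.
  - intros x y Lx Ly. pose proof (r_in x Lx) as Mx. pose proof (r_in y Ly) as My.
    split.
    + intro E.
      destruct (digits_inj _ _ _ _ _ (g_lt _ Mx) (g_lt _ My) E) as [Efx Eg].
      unfold r in *. rewrite Efx in *.
      rewrite (g_eq _ _ Mx My), leftquot_transl in Eg. exact Eg.
    + intro Hxy.
      assert (Efx : f x = f y) by (apply f_eq; auto).
      unfold r in *. rewrite Efx in *. f_equal. apply g_eq; auto.
      rewrite leftquot_transl. exact Hxy.
  - intros k Hk.
    assert (Hi : k / p < m) by (apply Nat.Div0.div_lt_upper_bound; lia).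
    assert (Hj : k mod p < p) by (apply Nat.mod_upper_bound; lia).
    destruct (t_spec _ Hi) as [Lt ft].
    destruct (g_onto _ Hj) as [y [My gy]].
    set (u := t (k / p)) in *.
    assert (Luy : L (gmul u y)) by auto.
    assert (f_uy : f (gmul u y) = k / p).
    { rewrite <- ft. symmetry. apply f_eq; auto. rewrite mulKg. exact My. }
    exists (gmul u y). split; [exact Luy|].
    unfold r. rewrite f_uy. fold u. rewrite mulKg, gy, Nat.mul_comm.
    symmetry. apply Nat.div_mod_eq.
Qed.

Lemma has_index_mul L M H m p :
  is_subgroup L -> is_subgroup M -> is_subgroup H ->
  subset H M -> subset M L ->
  has_index L M m -> has_index M H p -> has_index L H (m * p).
Proof.
  intros SL SM SH sHM sML Im Ip.
  destruct (has_index_labeling L M m SM Im) as [f Lf].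
  destruct (has_index_labeling M H p SH Ip) as [g Lg].
  destruct (labeling_tower L M H m p f g SL sHM sML Lf Lg) as [F LF].
  exact (labeling_has_index L H (m * p) F LF).
Qed.

Lemma exponential_trans L M H :
  is_subgroup L -> is_subgroup M -> is_subgroup H ->
  subset H M -> subset M L ->
  exponential L M -> exponential M H -> exponential L H.
Proof.
  intros SL SM SH sHM sML [m [Im Pm]] [p [Ip Pp]].
  exists (m * p). split.
  - exact (has_index_mul L M H m p SL SM SH sHM sML Im Ip).
  - intros x Lx. rewrite gpowM. auto.
Qed.

Lemma exponential_inter L H K :
  is_subgroup L -> is_subgroup H -> is_subgroup K ->
  subset H L -> subset K L ->
  exponential L H -> exponential L K -> exponential L (inter H K).
Proof.
  intros SL SH SK sHL sKL [m [Im Pm]] [k [Ik Pk]].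
  pose proof (is_subgroup_inter H K SH SK) as SHK.
  destruct (has_index_restrict L H K (inter H K) k SK SH sHL) as [p Ip];
    [unfold inter; tauto|exact Ik|].
  destruct (has_index_restrict L K H (inter H K) m SH SK sKL) as [q Iq];
    [unfold inter; tauto|exact Im|].
  assert (sHKH : subset (inter H K) H) by (intros x []; auto).
  assert (sHKK : subset (inter H K) K) by (intros x []; auto).
  pose proof (has_index_mul L H _ m p SL SH SHK sHKH sHL Im Ip) as Imp.
  pose proof (has_index_mul L K _ k q SL SK SHK sHKK sKL Ik Iq) as Ikq.
  assert (index_eq : m * p = k * q)
    by exact (has_index_unique L _ _ _ SHK Imp Ikq).
  exists (m * p). split; [exact Imp|].
  - intros x Lx. split.
    + rewrite gpowM. apply subgroup_gpow; auto.
    + rewrite index_eq, gpowM. apply subgroup_gpow; auto.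
Qed.

End CosetLabelings.

Theorem lemma4p6 (G : group) :
  (forall H M : G -> Prop,
     is_subgroup H -> is_subgroup M -> subset H M ->
     exponential (whole G) M -> exponential M H ->
     exponential (whole G) H) /\
  (forall H K : G -> Prop,
     is_subgroup H -> is_subgroup K ->
     exponential (whole G) H -> exponential (whole G) K ->
     exponential (whole G) (inter H K)).
Proof.
  split.
  - intros H M SH SM sHM.
    apply (exponential_trans (whole G) M H is_subgroup_whole SM SH sHM).
    intros x _. exact I.
  - intros H K SH SK.
    apply (exponential_inter (whole G) H K is_subgroup_whole SH SK);
      intros x _; exact I.
Qed.
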